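(* Let $\nu$ be a vector norm on $\mathbb{R}^n$, let $H=\{x\in\mathbb{R}^n: e^Tx=0\}$ where $e=(1,\ldots,1)^T$, and let $P_1,P_2,\ldots$ be a sequence of $n\times n$ column stochastic matrices. Suppose that $\sum_{i=1}^\infty(\max(\nu^0_H(P_i),1)-1)$ converges and that there is a subsequence $P_{i_1},P_{i_2},\ldots$ for which $\sum_{j=1}^\infty(1-\min(\nu^0_H(P_{i_j}),1))$ diverges. Then all general products formed from the sequence $P_1,P_2,\ldots$ are weakly ergodic.
   Context: A column stochastic matrix is a nonnegative matrix each of whose columns sums to $1$; $H$ is invariant under every such matrix. The coefficient of ergodicity associated with $\nu$ is $\nu^0_H(P)=\sup_{0\ne x\in H}\nu(Px)/\nu(x)$. General products: given a permutation $\sigma$ of the positive integers, set $B_i=P_{\sigma(i)}$; for an integer $p\ge0$ and each $r\ge1$, $C_{p,r}$ is a product of $B_{p+1},\ldots,B_{p+r}$, each used exactly once, in some order (chosen arbitrarily and independently for each $r$). All general products are weakly ergodic if for every such choice of $\sigma$, $p$ and orders, $\lim_{r\to\infty}C_{p,r}x=0$ for all $x\in H$. *)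

From HB Require Import structures.
From mathcomp Require Import all_boot all_order all_algebra all_fingroup.
From mathcomp Require Import all_classical all_reals all_analysis.
Set Implicit Arguments. Unset Strict Implicit. Unset Printing Implicit Defensive.
Import Order.TTheory GRing.Theory Num.Theory numFieldNormedType.Exports.
Local Open Scope classical_set_scope.
Local Open Scope ring_scope.

Section Defs.
Variables (R : realType) (n : nat).

Definition is_vnorm (nu : 'cV[R]_n -> R) : Prop :=
  [/\ forall x, 0 <= nu x,
      forall x, nu x = 0 -> x = 0,
      forall (a : R) x, nu (a *: x) = `|a| * nu x &
      forall x y, nu (x + y) <= nu x + nu y].

Definition inH (x : 'cV[R]_n) : Prop := (const_mx 1)^T *m x = 0 :> 'M[R]_1.

Definition col_stochastic (A : 'M[R]_n) : Prop :=
  (forall i j, 0 <= A i j) /\ (forall j, \sum_i A i j = 1).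

Definition ergcoef (nu : 'cV[R]_n -> R) (A : 'M[R]_n) : R :=
  sup [set nu (A *m x) / nu x | x in [set x | inH x /\ x != 0]].

(* C_{p,r}: product of B_{p}, ..., B_{p+r-1} (0-based) in the order given by
   the permutation tau of 'I_r : C = B_{p+tau 0} * B_{p+tau 1} * ... *)
Definition gen_product (B : nat -> 'M[R]_n) (p r : nat) (tau : 'S_r) : 'M[R]_n :=
  foldr (fun A C => A *m C) 1%:M [seq B (p + tau k)%N | k <- enum 'I_r].

Definition all_gen_products_weakly_ergodic (P : nat -> 'M[R]_n) : Prop :=
  forall sigma : nat -> nat, bijective sigma ->
  forall (p : nat) (tau : forall r : nat, 'S_r) (x : 'cV[R]_n), inH x ->
  forall i : 'I_n,
    (fun r : nat => (gen_product (fun k => P (sigma k)) p (tau r) *m x) i 0)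
      @ \oo --> (0 : R).

End Defs.

From HB Require Import structures.
From mathcomp Require Import all_boot all_order all_algebra all_fingroup.
From mathcomp Require Import all_classical all_reals all_analysis.
From mathcomp Require Import lra ring.
Set Implicit Arguments. Unset Strict Implicit. Unset Printing Implicit Defensive.
Import Order.TTheory GRing.Theory Num.Theory numFieldNormedType.Exports.
Local Open Scope classical_set_scope.
Local Open Scope ring_scope.

(* On the invariant subspace H the coefficient nu^0_H is submultiplicative, so
   nu(C_{p,r} x) <= (prod_{k<r} nu^0_H(P_{sigma(p+k)})) nu(x), whatever the order
   of the factors in C_{p,r}.  Split each coefficient c as max(c,1) * min(c,1):
   since sigma is injective, the max-factors have product at most
   exp (sum_i (max(c_i,1) - 1)) < oo, while the min-factors have product at most
   exp (- sum_{k<r} (1 - min(c_{sigma(p+k)},1))), and this sum diverges because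
   the indices sigma(p+k), k < r, eventually exhaust any initial segment of the
   divergent subsequence.  Hence nu(C_{p,r} x) -> 0, and since nu dominates a
   multiple of every coordinate (equivalence of norms on R^n, via compactness of
   the unit sphere), so do the entries of C_{p,r} x. *)

Section ReindexedSeries.
Variable R : realType.
Implicit Types (f : nat -> R) (t : nat -> nat).

Lemma ler_sum_subseq (I : eqType) (s r : seq I) (f : I -> R) :
  uniq s -> uniq r -> {subset s <= r} -> (forall i, 0 <= f i) ->
  \sum_(i <- s) f i <= \sum_(i <- r) f i.
Proof.
move=> us ur sr f0.
have r_perm : perm_eq r (s ++ [seq i <- r | i \notin s]).
  apply: uniq_perm => [//||x].
  - rewrite cat_uniq us filter_uniq //= andbT.
    by apply/hasPn => x; rewrite mem_filter => /andP[].
  - by rewrite mem_cat mem_filter; case: (boolP (x \in s)) => //= /sr.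
by rewrite (perm_big _ r_perm) big_cat /= lerDl sumr_ge0.
Qed.

Lemma ler_sum_injective f t J N : (forall i, 0 <= f i) -> injective t ->
  (forall j, (j < J)%N -> (t j < N)%N) ->
  \sum_(j < J) f (t j) <= \sum_(i < N) f i.
Proof.
move=> f0 t_inj tJN.
have -> : \sum_(j < J) f (t j) = \sum_(i <- map t (index_iota 0 J)) f i.
  by rewrite big_map big_mkord.
rewrite -(big_mkord xpredT f) /index_iota !subn0.
apply: ler_sum_subseq => //; first by rewrite map_inj_uniq ?iota_uniq.
- exact: iota_uniq.
- by move=> x /mapP[j]; rewrite !mem_iota !add0n /= => /tJN tjN ->.
Qed.

Lemma ltn_bigmax_image t r k : (k < r)%N -> (t k < \max_(j < r) (t j).+1)%N.
Proof. by move=> kr; exact: (@leq_bigmax _ (fun j : 'I_r => (t j).+1) (Ordinal kr)). Qed.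

Lemma sum_injective_le_lim f t : (forall i, 0 <= f i) -> injective t ->
  cvgn (series f) -> forall r, \sum_(k < r) f (t k) <= limn (series f).
Proof.
move=> f0 t_inj f_cvg r.
apply: le_trans (ler_sum_injective f0 t_inj (@ltn_bigmax_image t r)) _.
rewrite -(big_mkord xpredT f); apply: nondecreasing_cvgn_le => //.
exact: nondecreasing_series.
Qed.

Lemma series_injective_cvgy f t : (forall i, 0 <= f i) -> injective t ->
  series (f \o t) @ \oo --> +oo -> series f @ \oo --> +oo.
Proof.
move=> f0 t_inj /cvgryPge ft_oo; apply/cvgryPge => M.
have [J _ /(_ J (leqnn J)) MJ] := ft_oo M.
exists (\max_(j < J) (t j).+1) => // N JN; apply: le_trans MJ _.
rewrite /series /= !big_mkord; apply: (ler_sum_injective (t := t)) => // j.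
by move=> /(ltn_bigmax_image t) /leq_trans; apply.
Qed.

Lemma series_bijective_cvgy f sigma : (forall i, 0 <= f i) -> bijective sigma ->
  series f @ \oo --> +oo -> series (f \o sigma) @ \oo --> +oo.
Proof.
move=> f0 [sinv sigmaK sinvK] f_oo.
apply: (series_injective_cvgy (t := sinv)) => [i||] /=; first exact: f0.
  exact: can_inj sinvK.
by have -> : (f \o sigma) \o sinv = f by apply/funext => i /=; rewrite sinvK.
Qed.

Lemma series_shift_cvgy f p :
  series f @ \oo --> +oo -> series (fun k => f (p + k)%N) @ \oo --> +oo.
Proof.
move=> /cvgryPge f_oo; apply/cvgryPge => M.
have [N _ MN] := f_oo (M + series f p).
exists N => // r Nr; have := MN (p + r)%N (leq_trans Nr (leq_addl _ _)).
rewrite /series /= !big_mkord big_split_ord /=; lra.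
Qed.

End ReindexedSeries.

Section VanishingProducts.
Variable R : realType.

Lemma prod1D_le_expR_sum (I : Type) (s : seq I) (x : I -> R) :
  (forall i, -1 <= x i) -> \prod_(i <- s) (1 + x i) <= expR (\sum_(i <- s) x i).
Proof.
move=> x_ge; rewrite expR_sum; apply: ler_prod => i _.
by rewrite expR_ge1Dx andbT -lerBlDl sub0r.
Qed.

Lemma maxr1_mul_minr1 (x : R) : Num.max x 1 * Num.min x 1 = x.
Proof.
by case: (lerP x 1) => [x1|/ltW x1]; rewrite ?max_r ?min_l ?max_l ?min_r ?mul1r ?mulr1.
Qed.

Lemma prod_reindexed_cvg0 (c : nat -> R) (sigma : nat -> nat) (p : nat) :
  (forall i, 0 <= c i) -> bijective sigma ->
  cvgn (series (fun i => Num.max (c i) 1 - 1)) ->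
  (exists s : nat -> nat, {homo s : a b / (a < b)%N} /\
     ~ cvgn (series (fun j => 1 - Num.min (c (s j)) 1))) ->
  (fun r => \prod_(k < r) c (sigma (p + k)%N)) @ \oo --> 0.
Proof.
move=> c0 sigma_bij up_cvg [s [s_mono down_dvg]].
pose up i := Num.max (c i) 1 - 1; pose down i := 1 - Num.min (c i) 1.
have up_ge0 i : 0 <= up i by rewrite subr_ge0 le_max lexx orbT.
have down_ge0 i : 0 <= down i by rewrite subr_ge0 ge_min lexx orbT.
have down_le1 i : down i <= 1 by rewrite lerBlDr lerDl le_min c0 ler01.
have c_split i : c i = (1 + up i) * (1 - down i).
  by rewrite /up /down addrC subrK opprB addrC subrK maxr1_mul_minr1.
pose t k := sigma (p + k)%N.
have t_inj : injective t.
  by move=> k l /(bij_inj sigma_bij)/eqP; rewrite eqn_add2l => /eqP.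
have down_oo : series (down \o t) @ \oo --> +oo.
  apply: series_shift_cvgy (series_bijective_cvgy down_ge0 sigma_bij _).
  apply: (series_injective_cvgy (t := s)) => //; first exact/incn_inj/leq_mono.
  apply: nondecreasing_dvgn_lt down_dvg.
  by apply: nondecreasing_series => k _ _; exact: down_ge0.
pose S := limn (series up).
apply: (@squeeze_cvgr _ _ _ _ (cst 0) (fun r => expR S * expR (- series (down \o t) r))).
- near=> r; rewrite prodr_ge0 //=; under eq_bigr do rewrite c_split.
  rewrite big_split /= ler_pM ?prodr_ge0 // => [k _|k _||].
  + by rewrite addr_ge0.
  + by rewrite subr_ge0.
  + apply: le_trans (prod1D_le_expR_sum _ _) _ => [k|].
      exact: le_trans (lerN10 R) (up_ge0 _).
    by rewrite ler_expR (sum_injective_le_lim up_ge0 t_inj up_cvg).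
  + rewrite /series /= big_mkord -sumrN.
    by apply: prod1D_le_expR_sum => k; rewrite lerN2.
- exact: cvg_cst.
- rewrite -(mulr0 (expR S)); apply: cvgMl_tmp.
  exact: (cvg_comp _ (fun x : R => expR (- x)) down_oo (@cvgr_expR R)).
Unshelve. all: by end_near.
Qed.

End VanishingProducts.

Lemma ler_mx_entry_norm (K : realDomainType) m p (x : 'M[K]_(m, p)) i j :
  `|x i j| <= `|x|.
Proof. by rewrite [`|x|]mx_normrE; apply/bigmax_geP; right; exists (i, j). Qed.

Lemma stochastic_mulmx_inH (R : realType) n (A : 'M[R]_n) (x : 'cV[R]_n) :
  col_stochastic A -> inH x -> inH (A *m x).
Proof.
move=> [_ colA] Hx; rewrite /inH mulmxA.
suff -> : (const_mx 1)^T *m A = (const_mx 1)^T :> 'rV[R]_n by [].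
apply/matrixP => i j; rewrite !mxE -[RHS](colA j).
by apply: eq_bigr => k _; rewrite !mxE mul1r.
Qed.

Lemma inH_foldr_mulmx (R : realType) n (L : seq 'M[R]_n) (x : 'cV[R]_n) :
  {in L, forall A, col_stochastic A} -> inH x ->
  inH (foldr (fun A C => A *m C) 1%:M L *m x).
Proof.
elim: L => [|A L IH] L_stoch Hx /=; first by rewrite mul1mx.
rewrite -mulmxA; apply: stochastic_mulmx_inH; first exact/L_stoch/mem_head.
by apply: IH => // B LB; apply: L_stoch; rewrite in_cons LB orbT.
Qed.

Section VectorNorm.
Variables (R : realType) (n : nat) (nu : 'cV[R]_n -> R).
Hypothesis nu_norm : is_vnorm nu.
Implicit Types (x y : 'cV[R]_n) (a t : R).

Lemma vnorm_ge0 x : 0 <= nu x. Proof. by case: nu_norm. Qed.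

Lemma vnormZ a x : nu (a *: x) = `|a| * nu x. Proof. by case: nu_norm. Qed.

Lemma vnormD x y : nu (x + y) <= nu x + nu y. Proof. by case: nu_norm. Qed.

Lemma vnorm_gt0 x : x != 0 -> 0 < nu x.
Proof.
case: nu_norm => _ nu_eq0 _ _ x0; rewrite lt_def vnorm_ge0 andbT.
by apply: contra x0 => /eqP/nu_eq0 ->.
Qed.

Lemma vnorm0 : nu 0 = 0.
Proof. by rewrite -(scale0r (0 : 'cV[R]_n)) vnormZ normr0 mul0r. Qed.

Lemma vnormN x : nu (- x) = nu x.
Proof. by rewrite -scaleN1r vnormZ normrN1 mul1r. Qed.

Lemma vnorm_sum (I : Type) (s : seq I) (F : I -> 'cV[R]_n) :
  nu (\sum_(i <- s) F i) <= \sum_(i <- s) nu (F i).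
Proof.
apply: (big_ind2 (fun y t => nu y <= t)) => [|y1 t1 y2 t2 h1 h2|//].
  by rewrite vnorm0.
by rewrite (le_trans (vnormD _ _)) // lerD.
Qed.

Lemma vnorm_dist x y : `|nu x - nu y| <= nu (x - y).
Proof.
have tri u v : nu u - nu v <= nu (u - v) by rewrite lerBlDr -{1}(subrK v u) vnormD.
rewrite ler_norml tri andbT lerNl opprB (le_trans (tri y x)) //.
by rewrite -vnormN opprB.
Qed.

Let basis_vnorm := \sum_j nu (delta_mx j 0).

Lemma basis_vnorm_ge0 : 0 <= basis_vnorm.
Proof. by apply: sumr_ge0 => j _; exact: vnorm_ge0. Qed.

Lemma vnorm_le_entries y t : (forall j, `|y j 0| <= t) -> nu y <= t * basis_vnorm.
Proof.
move=> y_le; have -> : y = \sum_j y j 0 *: delta_mx j 0.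
  apply/matrixP => a b; rewrite summxE (bigD1 a) //= big1 => [|j ja].
    by rewrite !mxE !eqxx ord1 mulr1 addr0.
  by rewrite !mxE eq_sym (negbTE ja) mulr0.
rewrite (le_trans (vnorm_sum _ _)) // mulr_sumr ler_sum // => j _.
by rewrite vnormZ ler_wpM2r // vnorm_ge0.
Qed.

Lemma vnorm_trmx_le (v : 'rV[R]_n) : nu v^T <= `|v| * basis_vnorm.
Proof. by apply: vnorm_le_entries => j; rewrite mxE ler_mx_entry_norm. Qed.

(* Row vectors, because [bounded_closed_compact] is stated for ['rV_n]. *)
Lemma continuous_vnorm_trmx : continuous (fun v : 'rV[R]_n => nu v^T).
Proof.
move=> v; apply/(@cvgrPdist_lt _ _ _ (nbhs v) (nbhs_filter v)) => e e_gt0.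
have C_gt0 : 0 < basis_vnorm + 1 by rewrite ltr_wpDl ?basis_vnorm_ge0.
have d_gt0 : 0 < e / (basis_vnorm + 1) by rewrite divr_gt0.
near=> w; have vw : `|v - w| < e / (basis_vnorm + 1).
  by near: w; apply: cvgr_dist_lt => //; exact: cvg_id.
apply: le_lt_trans (vnorm_dist _ _) _; rewrite -linearB /=.
apply: le_lt_trans (vnorm_trmx_le _) _.
apply: le_lt_trans (ler_wpM2r basis_vnorm_ge0 (ltW vw)) _.
by rewrite mulrAC ltr_pdivrMr // ltr_pM2l // ltrDl ltr01.
Unshelve. all: by end_near.
Qed.

Lemma vnorm_dominates_entries : exists2 m, 0 < m & forall y i, m * `|y i 0| <= nu y.
Proof.
have [[z z0]|all0] := pselect (exists z : 'cV[R]_n, z != 0); last first.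
  exists 1 => // y i; have [->|y0] := eqVneq y 0; last by case: all0; exists y.
  by rewrite mxE normr0 mulr0 vnorm0.
pose sphere := [set v : 'rV[R]_n | `|v| = 1].
have normalize (u : 'rV[R]_n) : u != 0 -> sphere (`|u|^-1 *: u).
  by move=> u0; rewrite /sphere /= normrZ normfV normr_id mulVf // normr_eq0.
have sphere_compact : compact sphere.
  apply: bounded_closed_compact.
    exists 1; split; first exact: num_real.
    by move=> M M_gt1 v /= ->; exact: ltW.
  apply: (@preimage_closed _ _ (Num.norm : 'rV[R]_n -> R) [set x : R | x = 1]).
    by move=> u _; exact: norm_continuous.
  exact: closed_eq.
have sphere0 : sphere !=set0.
  by exists (`|z^T|^-1 *: z^T); apply: normalize; rewrite trmx_eq0.
have [c /set_mem c1 c_min] := compact_EVT_min sphere0 sphere_compact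
  (continuous_subspaceT continuous_vnorm_trmx).
have c0 : c^T != 0 by rewrite trmx_eq0 -normr_eq0 c1 oner_neq0.
exists (nu c^T); first exact: vnorm_gt0.
move=> y i; have [->|y0] := eqVneq y 0; first by rewrite mxE normr0 mulr0 vnorm0.
have yT0 : y^T != 0 by rewrite trmx_eq0.
have := c_min _ (mem_set (normalize _ yT0)).
rewrite linearZ /= trmxK vnormZ normfV normr_id ler_pdivlMl ?normr_gt0 //.
move=> /(le_trans _); apply; rewrite mulrC ler_wpM2r ?vnorm_ge0 //.
by have := ler_mx_entry_norm y^T 0 i; rewrite mxE.
Qed.

Lemma vnorm_mulmx_bounded (A : 'M[R]_n) :
  exists K, forall x, nu (A *m x) <= K * nu x.
Proof.
have [m m_gt0 m_le] := vnorm_dominates_entries.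
pose S := \sum_j \sum_k `|A j k|.
exists (S / m * basis_vnorm) => x.
have -> : S / m * basis_vnorm * nu x = S * (nu x / m) * basis_vnorm by ring.
apply: vnorm_le_entries => j.
have x_le k : `|x k 0| <= nu x / m by rewrite ler_pdivlMr // mulrC m_le.
rewrite mxE (le_trans (ler_norm_sum _ _ _)) //.
apply: (@le_trans _ _ (\sum_k `|A j k| * (nu x / m))).
  by apply: ler_sum => k _; rewrite normrM ler_wpM2l.
rewrite -mulr_suml ler_wpM2r ?divr_ge0 ?vnorm_ge0 ?(ltW m_gt0) //.
by rewrite /S [leRHS](bigD1 j) //= lerDl sumr_ge0 // => j' _; exact: sumr_ge0.
Qed.

Lemma vnorm_ratio_le_ergcoef (A : 'M[R]_n) x : inH x -> x != 0 ->
  nu (A *m x) / nu x <= ergcoef nu A.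
Proof.
move=> Hx x0; have [K A_le] := vnorm_mulmx_bounded A.
apply: sup_upper_bound; last by exists x.
split; first by exists (nu (A *m x) / nu x), x.
by exists K => _ [y [_ y0] <-]; rewrite ler_pdivrMr ?vnorm_gt0.
Qed.

Lemma ergcoef_ge0 (A : 'M[R]_n) : 0 <= ergcoef nu A.
Proof.
have [[x [Hx x0]]|H0] := pselect (exists x, inH x /\ x != 0).
  by apply: le_trans (vnorm_ratio_le_ergcoef A Hx x0); rewrite divr_ge0 ?vnorm_ge0.
suff E0 : [set nu (A *m x) / nu x | x in [set x | inH x /\ x != 0]] = set0.
  by rewrite /ergcoef E0 sup0.
by apply/seteqP; split => // t [x Hx _]; case: H0; exists x.
Qed.

Lemma vnorm_mulmx_le_ergcoef (A : 'M[R]_n) x : inH x -> nu (A *m x) <= ergcoef nu A * nu x.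
Proof.
move=> Hx; have [->|x0] := eqVneq x 0; first by rewrite mulmx0 vnorm0 mulr0.
by rewrite -ler_pdivrMr ?vnorm_gt0 // vnorm_ratio_le_ergcoef.
Qed.

Lemma vnorm_foldr_mulmx_le (L : seq 'M[R]_n) x :
  {in L, forall A, col_stochastic A} -> inH x ->
  nu (foldr (fun A C => A *m C) 1%:M L *m x) <=
    (\prod_(A <- L) ergcoef nu A) * nu x.
Proof.
elim: L => [|A L IH] L_stoch Hx /=; first by rewrite mul1mx big_nil mul1r.
have L'_stoch : {in L, forall B, col_stochastic B}.
  by move=> B LB; apply: L_stoch; rewrite in_cons LB orbT.
rewrite -mulmxA big_cons -mulrA.
rewrite (le_trans (vnorm_mulmx_le_ergcoef _ (inH_foldr_mulmx L'_stoch Hx))) //.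
by rewrite ler_wpM2l ?ergcoef_ge0 ?IH.
Qed.

Lemma vnorm_gen_product_le (B : nat -> 'M[R]_n) p r (tau : 'S_r) x :
  (forall k, col_stochastic (B k)) -> inH x ->
  nu (gen_product B p tau *m x) <= (\prod_(k < r) ergcoef nu (B (p + k)%N)) * nu x.
Proof.
move=> B_stoch Hx.
have <- : \prod_(A <- [seq B (p + tau k)%N | k <- enum 'I_r]) ergcoef nu A =
    \prod_(k < r) ergcoef nu (B (p + k)%N).
  rewrite big_map big_enum /= [RHS](reindex_inj (@perm_inj _ tau)) /=.
  by apply: eq_big.
by apply: vnorm_foldr_mulmx_le => // _ /mapP[k _ ->].
Qed.

End VectorNorm.

Theorem theorem4p3 (R : realType) (n : nat) (nu : 'cV[R]_n -> R)
  (P : nat -> 'M[R]_n) :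
  is_vnorm nu ->
  (forall i, col_stochastic (P i)) ->
  cvg (series (fun i => Num.max (ergcoef nu (P i)) 1 - 1) @ \oo) ->
  (exists s : nat -> nat, {homo s : a b / (a < b)%N} /\
     ~ cvg (series (fun j => 1 - Num.min (ergcoef nu (P (s j))) 1) @ \oo)) ->
  all_gen_products_weakly_ergodic P.
Proof.
move=> nu_norm P_stoch up_cvg down_dvg sigma sigma_bij p tau x Hx i.
have [m m_gt0 m_le] := vnorm_dominates_entries nu_norm.
have prod_cvg0 := prod_reindexed_cvg0 p
  (fun j => ergcoef_ge0 nu_norm (P j)) sigma_bij up_cvg down_dvg.
apply: norm_cvg0; apply: (@squeeze_cvgr _ _ _ _ (cst 0)
  (fun r => nu x / m * \prod_(k < r) ergcoef nu (P (sigma (p + k)%N)))).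
- near=> r; rewrite normr_ge0 /= mulrAC ler_pdivlMr // mulrC.
  rewrite (le_trans (m_le _ _)) // mulrC.
  exact: vnorm_gen_product_le.
- exact: cvg_cst.
- by rewrite -(mulr0 (nu x / m)); exact: cvgMl_tmp prod_cvg0.
Unshelve. all: by end_near.
Qed.
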